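(* Let $(S,\Delta,\mathbb{P})$ be a probability space, $(U,d)$ a separable metric space, $\mathfrak{X}$ the set of $U$-valued random variables on $S$, $r\geq0$, and $\mathcal{I}$ an admissible ideal on $\mathbb{N}$. Then for every sequence $\underline{X}=\{X_n\}$ in $\mathfrak{X}$, the set $\Gamma^{r^s}_{\underline{X}}(\mathcal{I}^{\mathbb{P}})$ is closed in $(\mathfrak{X}^0,\rho)$.
   Context: The Ky Fan metric is $\rho(X,Y)=\inf\{\varepsilon>0:\mathbb{P}(d(X,Y)>\varepsilon)\leq\varepsilon\}$; $\mathfrak{X}^0$ is the set of equivalence classes of $\mathfrak{X}$ under almost sure equality, on which $\rho$ is a metric. An ideal on $\mathbb{N}$ is a family $\mathcal{I}\subseteq\mathcal{P}(\mathbb{N})$ with $\varnothing\in\mathcal{I}$, closed under finite unions and under subsets; it is admissible if $\mathbb{N}\notin\mathcal{I}$ and $\{t\}\in\mathcal{I}$ for every $t\in\mathbb{N}$. $\Gamma^{r^s}_{\underline{X}}(\mathcal{I}^{\mathbb{P}})$ is the set of $Y\in\mathfrak{X}$ with $\{n:\mathbb{P}(d(X_n,Y)<r+\varepsilon)>1-\delta\}\notin\mathcal{I}$ for all $\varepsilon,\delta>0$. *)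

From HB Require Import structures.
From mathcomp Require Import all_boot all_order all_algebra.
From mathcomp Require Import all_classical all_reals all_analysis.
Set Implicit Arguments. Unset Strict Implicit. Unset Printing Implicit Defensive.
Import Order.TTheory GRing.Theory Num.Theory.
Local Open Scope classical_set_scope.
Local Open Scope ring_scope.

Definition is_metric (R : realType) (U : Type) (d : U -> U -> R) : Prop :=
  (forall x y, 0 <= d x y) /\ (forall x y, d x y = 0 <-> x = y) /\
  (forall x y, d x y = d y x) /\ (forall x y z, d x z <= d x y + d y z).

Definition separable_metric (R : realType) (U : Type) (d : U -> U -> R) : Prop :=
  exists D : set U, countable D /\
    forall x (e : R), 0 < e -> exists2 y, D y & d x y < e.

Definition dopen (R : realType) (U : Type) (d : U -> U -> R) : set (set U) :=
  [set O | forall x, O x -> exists2 e : R, 0 < e & [set y | d x y < e] `<=` O].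

Definition dborel (R : realType) (U : Type) (d : U -> U -> R) : set (set U) :=
  <<s dopen d >>.

Definition random_var (dS : measure_display) (S : measurableType dS)
  (R : realType) (U : Type) (d : U -> U -> R) (X : S -> U) : Prop :=
  forall B, dborel d B -> measurable (X @^-1` B).

Definition kyfan (dS : measure_display) (S : measurableType dS) (R : realType)
  (P : probability S R) (U : Type) (d : U -> U -> R) (X Y : S -> U) : R :=
  inf [set e : R | 0 < e /\ (P [set s | (e < d (X s) (Y s))%R] <= e%:E)%E].

Definition ideal (I : set (set nat)) : Prop :=
  I set0 /\ (forall A B, I A -> I B -> I (A `|` B)) /\
  (forall A B, B `<=` A -> I A -> I B).

Definition admissible_ideal (I : set (set nat)) : Prop :=
  ideal I /\ ~ I setT /\ (forall t : nat, I [set t]).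

Definition Gamma_rs (dS : measure_display) (S : measurableType dS) (R : realType)
  (P : probability S R) (U : Type) (d : U -> U -> R) (X : nat -> S -> U)
  (r : R) (I : set (set nat)) : set (S -> U) :=
  [set Y | random_var d Y /\
    forall eps delta : R, 0 < eps -> 0 < delta ->
      ~ I [set n | ((1 - delta)%R%:E < P [set s | (d (X n s) (Y s) < r + eps)%R])%E]].

From HB Require Import structures.
From mathcomp Require Import all_boot all_order all_algebra.
From mathcomp Require Import all_classical all_reals all_analysis.
From mathcomp Require Import lra.
Set Implicit Arguments. Unset Strict Implicit. Unset Printing Implicit Defensive.
Import Order.TTheory GRing.Theory Num.Theory.
Local Open Scope classical_set_scope.
Local Open Scope ring_scope.

(* Let Y be a Ky Fan limit of elements of Gamma, and fix eps, delta > 0.  Pick Z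
   in Gamma with rho(Z, Y) < e' for a small e', so that P(d(Z, Y) > e') <= e'.
   By the triangle inequality, P(d(X_n, Y) < r + eps) >= P(d(X_n, Z) < r + eps/2) - e',
   hence every n with P(d(X_n, Z) < r + eps/2) > 1 - delta/2 satisfies
   P(d(X_n, Y) < r + eps) > 1 - delta.  The former set of indices is not in the
   ideal, so neither is the latter, which is larger.  Separability of U is what
   makes the events {d(Z, Y) < c} and {d(Z, Y) > c} measurable. *)

Lemma countable_bigcup_measurable d (T : measurableType d) I (D : set I)
    (F : I -> set T) :
  countable D -> (forall i, D i -> measurable (F i)) ->
  measurable (\bigcup_(i in D) F i).
Proof.
have [->|/set0P[i0 _]] := eqVneq D set0; first by rewrite bigcup_set0.
move=> /countable_injP[f injf] mF.
rewrite -(injpinv_image (cst i0) injf) bigcup_image.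
apply: bigcup_measurable => _ [i Di <-].
by rewrite (pinvKV _ injf) ?inE //; apply: mF.
Qed.

Section dense_metric.
Variables (R : realType) (U : Type) (d : U -> U -> R).
Hypothesis hd : is_metric d.

Let dsym x y : d x y = d y x. Proof. by case: hd => _ [_ []]. Qed.
Let dtri x y z : d x z <= d x y + d y z. Proof. by case: hd => _ [_ [_]]. Qed.

Lemma dopen_ball q a : dopen d [set y | d q y < a].
Proof.
move=> y /= qya; exists (a - d q y) => [|z /= yz]; first by rewrite subr_gt0.
by have := dtri q y z; lra.
Qed.

Lemma dopen_ball_compl q a : dopen d [set y | a < d q y].
Proof.
move=> y /= aqy; exists (d q y - a) => [|z /= yz]; first by rewrite subr_gt0.
by have := dtri q z y; rewrite (dsym z y); lra.
Qed.

Variable D : set U.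
Hypothesis D_dense : forall x (e : R), 0 < e -> exists2 y, D y & d x y < e.

Lemma dense_rat_near x (e : R) : 0 < e ->
  exists q (t : rat), D q /\ d q x < ratr t /\ ratr t < e.
Proof.
move=> e0; have [q Dq xq] := D_dense x e0.
have [|t] := @rat_in_itvoo R (d q x) e; first by rewrite dsym.
by rewrite in_itv /= => /andP[qxt te]; exists q, t.
Qed.

Lemma dist_lt_dense x y c : d x y < c <->
  exists q (t : rat), D q /\ d q x < ratr t /\ d q y < c - ratr t.
Proof.
split=> [xyc|[q [t [_ [qxt qyt]]]]]; last by have := dtri x q y; rewrite (dsym x q); lra.
have [|q [t [Dq [qxt tc]]]] := dense_rat_near x (e := (c - d x y) / 2); first lra.
by exists q, t; do 2!split=> //; have := dtri q x y; lra.
Qed.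

Lemma dist_gt_dense x y c : c < d x y <->
  exists q (t : rat), D q /\ d q x < ratr t /\ c + ratr t < d q y.
Proof.
split=> [cxy|[q [t [_ [qxt tqy]]]]]; last by have := dtri q x y; lra.
have [|q [t [Dq [qxt tc]]]] := dense_rat_near x (e := (d x y - c) / 2); first lra.
by exists q, t; do 2!split=> //; have := dtri x q y; rewrite (dsym x q); lra.
Qed.

End dense_metric.

Lemma lte_subr_bounded (R : realType) (x y : R) (a b c : \bar R) :
  (0 <= c)%E -> (c <= y%:E)%E -> (x%:E < a)%E -> (a <= b + c)%E ->
  ((x - y)%:E < b)%E.
Proof.
case: a => [a||]; case: b => [b||]; case: c => [c||] //=;
  rewrite ?lte_fin ?lee_fin ?leey ?ltey ?leNye //= => *; lra.
Qed.

Section random_variables.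
Variables (dS : measure_display) (S : measurableType dS) (R : realType).
Variables (U : Type) (d : U -> U -> R).
Hypotheses (hd : is_metric d) (hsep : separable_metric d).

Lemma measurable_preimage_dopen (Z : S -> U) (O : set U) :
  random_var d Z -> dopen d O -> measurable (Z @^-1` O).
Proof. by move=> hZ hO; apply: hZ; apply: sub_sigma_algebra. Qed.

Lemma measurable_dopen_pairs (D : set U) (Z Y : S -> U) (A B : U * rat -> set U) :
  countable D -> random_var d Z -> random_var d Y ->
  (forall i, dopen d (A i)) -> (forall i, dopen d (B i)) ->
  measurable (\bigcup_(i in D `*` [set: rat]) (Z @^-1` A i `&` Y @^-1` B i)).
Proof.
move=> cD hZ hY hA hB; apply: countable_bigcup_measurable.
  by apply: countableX => //; apply: countableP.
by move=> i _; apply: measurableI; apply: measurable_preimage_dopen.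
Qed.

Lemma measurable_dist_lt (Z Y : S -> U) (c : R) :
  random_var d Z -> random_var d Y -> measurable [set s | d (Z s) (Y s) < c].
Proof.
move=> hZ hY; have [D [cD D_dense]] := hsep.
rewrite (_ : [set s | _] = \bigcup_(i in D `*` [set: rat])
    (Z @^-1` [set x | d i.1 x < ratr i.2] `&`
     Y @^-1` [set y | d i.1 y < c - ratr i.2])).
  by apply: measurable_dopen_pairs => // i; apply: dopen_ball.
apply/seteqP; split=> s /=.
  by move=> /(dist_lt_dense hd D_dense)[q [t [Dq h]]]; exists (q, t).
by move=> [[q t] [Dq _] h]; apply/(dist_lt_dense hd D_dense); exists q, t.
Qed.

Lemma measurable_dist_gt (Z Y : S -> U) (c : R) :
  random_var d Z -> random_var d Y -> measurable [set s | c < d (Z s) (Y s)].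
Proof.
move=> hZ hY; have [D [cD D_dense]] := hsep.
rewrite (_ : [set s | _] = \bigcup_(i in D `*` [set: rat])
    (Z @^-1` [set x | d i.1 x < ratr i.2] `&`
     Y @^-1` [set y | c + ratr i.2 < d i.1 y])).
  by apply: measurable_dopen_pairs => // i; [apply: dopen_ball|apply: dopen_ball_compl].
apply/seteqP; split=> s /=.
  by move=> /(dist_gt_dense hd D_dense)[q [t [Dq h]]]; exists (q, t).
by move=> [[q t] [Dq _] h]; apply/(dist_gt_dense hd D_dense); exists q, t.
Qed.

Variable P : probability S R.

Lemma kyfan_lt (Z Y : S -> U) (e : R) :
  random_var d Z -> random_var d Y -> kyfan P d Z Y < e ->
  exists2 e', 0 < e' < e & (P [set s | (e' < d (Z s) (Y s))%R] <= e'%:E)%E.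
Proof.
move=> hZ hY /inf_lt[].
  by exists 1; split=> //; apply: probability_le1; apply: measurable_dist_gt.
by move=> e' [e'0 Pe'] e'e; exists e' => //; apply/andP.
Qed.

Lemma prob_dist_lt_triangle (X Z Y : S -> U) (a b e' : R) :
  random_var d X -> random_var d Z -> random_var d Y -> a + e' <= b ->
  (P [set s | (d (X s) (Z s) < a)%R] <=
   P [set s | (d (X s) (Y s) < b)%R] + P [set s | (e' < d (Z s) (Y s))%R])%E.
Proof.
move=> hX hZ hY abe; have [_ [_ [_ dtri]]] := hd.
apply: le_trans (measureU2 _ _ _); [|exact: measurable_dist_lt|exact: measurable_dist_gt].
apply: le_measure; rewrite ?inE; first exact: measurable_dist_lt.
  by apply: measurableU; [apply: measurable_dist_lt|apply: measurable_dist_gt].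
move=> s /= XZa; have [ZYe'|] := ltP e' (d (Z s) (Y s)); [by right|left].
by have := dtri (X s) (Z s) (Y s); lra.
Qed.

Lemma prob_dist_lt_transfer (X Z Y : S -> U) (a b e' x : R) :
  random_var d X -> random_var d Z -> random_var d Y -> a + e' <= b ->
  (P [set s | (e' < d (Z s) (Y s))%R] <= e'%:E)%E ->
  (x%:E < P [set s | (d (X s) (Z s) < a)%R])%E ->
  ((x - e')%:E < P [set s | (d (X s) (Y s) < b)%R])%E.
Proof.
move=> hX hZ hY abe Pe' xPXZ.
apply: lte_subr_bounded (measure_ge0 _ _) Pe' xPXZ _.
exact: prob_dist_lt_triangle.
Qed.

End random_variables.

Theorem proposition3p11 (dS : measure_display) (S : measurableType dS)
  (R : realType) (P : probability S R) (U : Type) (d : U -> U -> R)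
  (hd : is_metric d) (hsep : separable_metric d)
  (r : R) (hr : 0 <= r) (I : set (set nat)) (hI : admissible_ideal I)
  (X : nat -> S -> U) (hX : forall n, random_var d (X n)) :
  forall Y : S -> U, random_var d Y ->
    (forall e : R, 0 < e ->
       exists2 Z, Gamma_rs P d X r I Z & kyfan P d Z Y < e) ->
    Gamma_rs P d X r I Y.
Proof.
move=> Y hY Y_lim; split=> // eps delta eps0 delta0 IY.
have e0 : 0 < Num.min (eps / 2) (delta / 2) by rewrite lt_min; apply/andP; lra.
have [Z [hZ Z_Gamma] ZY] := Y_lim _ e0.
have [e' /andP[e'0 e'e] PZY] := kyfan_lt hd hsep hZ hY ZY.
move: e'e; rewrite lt_min => /andP[e'eps e'delta].
apply: (Z_Gamma (eps / 2) (delta / 2)); [lra|lra|].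
have [[_ [_ I_sub]] _] := hI; apply: I_sub IY => n /= XZ.
apply: le_lt_trans (prob_dist_lt_transfer hd hsep (hX n) hZ hY _ PZY XZ); last lra.
by rewrite lee_fin; lra.
Qed.
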